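(* Let $n\ge1$ and let $\mathcal{T}:\mathrm{Cvx}(\mathbb{R}^n)\to\mathrm{Cvx}(\mathbb{R}^n)$ satisfy: (1) for all $\phi,\psi\in\mathrm{Cvx}(\mathbb{R}^n)$, $\phi\le\psi$ if and only if $\mathcal{T}\phi\le\mathcal{T}\psi$; (2) if $\phi\in\mathrm{Cvx}(\mathbb{R}^n)$ is positively homogeneous (i.e. $\phi(\lambda x)=\lambda\phi(x)$ for all $x$ and all $\lambda>0$), then $\mathcal{T}\phi=\phi$; (3) the image $\mathrm{Im}\,\mathcal{T}=\{\mathcal{T}\phi:\phi\in\mathrm{Cvx}(\mathbb{R}^n)\}$ is closed under pointwise addition, in the sense that whenever $\phi',\psi'\in\mathrm{Im}\,\mathcal{T}$ and $\phi'+\psi'$ is finite at some point, then $\phi'+\psi'\in\mathrm{Im}\,\mathcal{T}$. Then there is a constant $C>0$ such that $(\mathcal{T}\phi)(x)=\frac{1}{C}\phi(Cx)$ for all $\phi\in\mathrm{Cvx}(\mathbb{R}^n)$ and all $x\in\mathbb{R}^n$.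
   Context: $\mathrm{Cvx}(\mathbb{R}^n)$ denotes the set of functions $\phi:\mathbb{R}^n\to(-\infty,\infty]$ that are convex, lower semicontinuous, and finite at at least one point. For functions, $\phi\le\psi$ means $\phi(x)\le\psi(x)$ for all $x$. *)

From Stdlib Require Import Reals Lra.
From Stdlib Require Vectors.Fin.
Open Scope R_scope.

Definition vec (n : nat) : Type := Fin.t n -> R.
Definition vscal {n} (c : R) (x : vec n) : vec n := fun i => c * x i.
Definition vadd {n} (x y : vec n) : vec n := fun i => x i + y i.

(* Extended values in (-oo, +oo]: Some r = r, None = +oo. *)
Definition ext := option R.
Definition ele (a b : ext) : Prop :=
  match a, b with
  | _, None => True
  | None, Some _ => False
  | Some a', Some b' => a' <= b'
  end.
Definition eadd (a b : ext) : ext :=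
  match a, b with
  | Some a', Some b' => Some (a' + b')
  | _, _ => None
  end.
(* multiplication by a real c > 0, with c * (+oo) = +oo *)
Definition escal (c : R) (a : ext) : ext :=
  match a with Some a' => Some (c * a') | None => None end.

Definition fle {n} (f g : vec n -> ext) : Prop := forall x, ele (f x) (g x).

Definition rlt (t : R) (a : ext) : Prop :=
  match a with Some a' => t < a' | None => True end.

(* convexity with the usual conventions for +oo (endpoints l = 0, 1 trivial) *)
Definition convex {n} (f : vec n -> ext) : Prop :=
  forall (x y : vec n) (l : R), 0 < l < 1 ->
    ele (f (vadd (vscal l x) (vscal (1 - l) y)))
        (eadd (escal l (f x)) (escal (1 - l) (f y))).

(* lower semicontinuity; sup-norm neighbourhoods generate the usual
   topology of R^n *)
Definition lsc {n} (f : vec n -> ext) : Prop :=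
  forall (x : vec n) (t : R), rlt t (f x) ->
    exists d : R, 0 < d /\
      forall y : vec n, (forall i, Rabs (y i - x i) < d) -> rlt t (f y).

Definition Cvx {n} (f : vec n -> ext) : Prop :=
  convex f /\ lsc f /\ exists x, f x <> None.

Definition pos_hom {n} (f : vec n -> ext) : Prop :=
  forall (x : vec n) (l : R), 0 < l -> f (vscal l x) = escal l (f x).

From Stdlib Require Import Reals.
Open Scope R_scope.
From Stdlib Require Import Lra Lia ClassicalEpsilon FunctionalExtensionality Classical.

(* The proof computes [T] on the test functions [delta q e] (equal to [e] at
   [q], +oo elsewhere).  Since [phi q <= e] iff [phi <= delta q e], the values
   of [T] on these deltas determine [T phi] pointwise ([T_value_from_delta]).
   The tools are: the linear functions [ray_lin q k lam] on the ray R_+ q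
   (positively homogeneous, hence fixed by [T]), the constants, and the fact
   that images lying above [T (delta q e)] come from functions supported at
   [q], hence form a chain ([above_delta_comparable]).  For [q <> 0],
   comparing suitable sums of images along the ray shows that
   [T (delta q e) = delta (r q) (r e)] ([T_delta_form]); comparison with the
   constant [-1], whose image is the constant [- scale], gives [r = scale]
   ([delta_rate_is_scale]).  The origin is handled last, by convexity of the
   images of constants ([T_const_origin]).  The theorem follows with
   [C = 1 / scale]. *)

Definition dec (P : Prop) : {P} + {~ P} := excluded_middle_informative P.

Definition vzero {n} : vec n := fun _ => 0.

Lemma vec_ext {n} (x y : vec n) : (forall i, x i = y i) -> x = y.
Proof. intro h; apply functional_extensionality; exact h. Qed.

Lemma vec_neq {n} (x y : vec n) : x <> y -> exists i, x i <> y i.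
Proof.
  intro h. apply NNPP. intro hall. apply h, vec_ext. intro i.
  apply NNPP. intro hi. apply hall. now exists i.
Qed.

Lemma vscal_nonzero {n} (w : vec n) s : w <> vzero -> s <> 0 -> vscal s w <> vzero.
Proof.
  intros hw hs h. apply hw, vec_ext. intro i.
  assert (hi := f_equal (fun f => f i) h). unfold vscal, vzero in *. simpl in hi.
  apply Rmult_integral in hi. destruct hi; [contradiction|auto].
Qed.

Lemma exists_nonzero_vec n : (1 <= n)%nat -> exists w : vec n, w <> vzero.
Proof.
  intro hn. destruct n as [|m]; [lia|].
  exists (fun _ => 1). intro h. assert (h1 := f_equal (fun f => f Fin.F1) h).
  unfold vzero in h1. simpl in h1. lra.
Qed.

Lemma vscal_inv {n} (x : vec n) r : 0 < r -> vscal r (vscal (/ r) x) = x.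
Proof. intro h. apply vec_ext; intro i. unfold vscal. field. lra. Qed.

Lemma vec_bound n (v : vec n) : exists M, 0 < M /\ forall i, Rabs (v i) <= M.
Proof.
  induction n as [|n IH].
  - exists 1. split; [lra|]. intro i. apply (Fin.case0 (fun i => Rabs (v i) <= 1)).
  - destruct (IH (fun i => v (Fin.FS i))) as [M [hM hM2]].
    pose proof (Rabs_pos (v Fin.F1)).
    exists (M + Rabs (v Fin.F1)). split; [lra|].
    intro i. apply (Fin.caseS' i (fun i => Rabs (v i) <= M + Rabs (v Fin.F1))).
    + lra.
    + intro p. specialize (hM2 p). simpl in hM2. lra.
Qed.

Lemma mul_uniform_cont (a eps : R) : 0 < eps -> exists d, 0 < d /\
  forall u v, Rabs (u - v) < d -> Rabs (a * u - a * v) < eps.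
Proof.
  intro he. pose proof (Rabs_pos a). exists (eps / (Rabs a + 1)). split.
  - apply Rdiv_lt_0_compat; lra.
  - intros u v h. replace (a * u - a * v) with (a * (u - v)) by ring.
    rewrite Rabs_mult. pose proof (Rabs_pos (u - v)).
    apply Rle_lt_trans with (Rabs a * (eps / (Rabs a + 1))).
    + apply Rmult_le_compat_l; lra.
    + unfold Rdiv. rewrite <- Rmult_assoc.
      apply Rmult_lt_reg_r with (Rabs a + 1); [lra|].
      rewrite Rmult_assoc, Rinv_l by lra. nra.
Qed.

Lemma ele_top a : ele a None.
Proof. destruct a; simpl; auto. Qed.

Lemma eadd_top_r a : eadd a None = None.
Proof. destruct a; reflexivity. Qed.

Lemma ele_top_inv b : ele None b -> b = None.
Proof. destruct b; simpl; tauto. Qed.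

Lemma fle_ext {n} (f f' g g' : vec n -> ext) :
  (forall x, f x = f' x) -> (forall x, g x = g' x) -> fle f g -> fle f' g'.
Proof. intros e1 e2 h x. rewrite <- e1, <- e2. apply h. Qed.

Lemma escal_char (u w : ext) (r : R) : 0 < r ->
  (forall e, ele w (Some e) <-> ele u (Some (r * e))) -> u = escal r w.
Proof.
  intros hr h. destruct w as [b|].
  - pose proof (proj1 (h b) (Rle_refl b)) as hub.
    destruct u as [c|]; [|contradiction]. simpl in *.
    pose proof (proj2 (h (c / r))) as hcb. simpl in hcb.
    replace (r * (c / r)) with c in hcb by (field; lra).
    specialize (hcb (Rle_refl c)).
    f_equal. apply Rle_antisym; auto.
    apply Rmult_le_reg_r with (/ r); [apply Rinv_0_lt_compat; lra|].
    replace (r * b * / r) with b by (field; lra). exact hcb.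
  - destruct u as [c|]; simpl; auto. exfalso.
    apply (proj2 (h (c / r))). simpl.
    replace (r * (c / r)) with c by (field; lra). lra.
Qed.

(* A convex function bounded above by 0 cannot increase: extrapolating the
   segment from [x] through [y] beyond [y] would exceed the bound. *)
Lemma convex_bounded_le {n} (f : vec n -> ext) x y vx vy : convex f ->
  (forall z, ele (f z) (Some 0)) -> f x = Some vx -> f y = Some vy -> vy <= vx.
Proof.
  intros hc hb hx hy. destruct (Rle_or_lt vy vx) as [h|h]; auto. exfalso.
  set (d := vy - vx). assert (hd : 0 < d) by (unfold d; lra).
  assert (hvy : vy <= 0) by (specialize (hb y); rewrite hy in hb; exact hb).
  set (t := (1 - vy) / d). assert (ht : 0 < t) by (unfold t; apply Rdiv_lt_0_compat; lra).
  set (z := vadd (vscal (1 + t) y) (vscal (- t) x)).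
  set (L := / (1 + t)).
  assert (hL : 0 < L < 1).
  { unfold L. split; [apply Rinv_0_lt_compat; lra|].
    rewrite <- Rinv_1. apply Rinv_lt_contravar; lra. }
  specialize (hc z x L hL).
  assert (e : vadd (vscal L z) (vscal (1 - L) x) = y).
  { apply vec_ext; intro i. unfold z, L, vadd, vscal. field. lra. }
  rewrite e, hy, hx in hc.
  pose proof (hb z) as hz. destruct (f z) as [vz|]; [|contradiction].
  simpl in hc, hz.
  assert (e2 : 1 - L = t * L) by (unfold L; field; lra).
  rewrite e2 in hc.
  assert (vy * (1 + t) <= t * vx).
  { apply Rmult_le_reg_r with L; [lra|].
    replace (vy * (1 + t) * L) with vy by (unfold L; field; lra). nra. }
  assert (t * d = 1 - vy) by (unfold t; field; lra).
  unfold d in *. nra.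
Qed.

Lemma convex_bounded_const {n} (f : vec n -> ext) : convex f ->
  (forall z, ele (f z) (Some 0)) -> forall x y, f x = f y.
Proof.
  intros hc hb x y.
  pose proof (hb x) as hx. pose proof (hb y) as hy.
  destruct (f x) as [vx|] eqn:ex; [|contradiction].
  destruct (f y) as [vy|] eqn:ey; [|contradiction].
  f_equal. apply Rle_antisym; eapply convex_bounded_le; eauto.
Qed.

(* A convex function that is constant off the origin takes the same value at
   the origin: the origin is the midpoint of [w] and [-w] (upper bound), and
   [w] is the midpoint of the origin and [2 w] (lower bound). *)
Lemma convex_value_at_origin {n} (f : vec n -> ext) (w : vec n) c : convex f ->
  w <> vzero -> (forall x, x <> vzero -> f x = Some c) -> f vzero = Some c.
Proof.
  intros hc hw hf.
  pose proof (hc w (vscal (-1) w) (1/2) ltac:(lra)) as below.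
  replace (vadd (vscal (1/2) w) (vscal (1 - 1/2) (vscal (-1) w))) with (@vzero n) in below
    by (apply vec_ext; intro i; unfold vadd, vscal, vzero; field).
  rewrite (hf w hw), (hf _ (vscal_nonzero w (-1) hw ltac:(lra))) in below.
  destruct (f vzero) as [u|] eqn:E; [|contradiction]. simpl in below.
  pose proof (hc vzero (vscal 2 w) (1/2) ltac:(lra)) as above.
  replace (vadd (vscal (1/2) vzero) (vscal (1 - 1/2) (vscal 2 w))) with w in above
    by (apply vec_ext; intro i; unfold vadd, vscal, vzero; field).
  rewrite E, (hf w hw), (hf _ (vscal_nonzero w 2 hw ltac:(lra))) in above. simpl in above.
  f_equal. lra.
Qed.

Lemma ext_eq_of_lower (u : ext) (b : R) : (forall c, c <= b <-> ele (Some c) u) -> u = Some b.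
Proof.
  intro h. destruct u as [d|].
  - pose proof (proj1 (h b) (Rle_refl b)) as hbd. pose proof (proj2 (h d)) as hdb.
    simpl in *. f_equal. specialize (hdb (Rle_refl d)). lra.
  - pose proof (proj2 (h (b + 1)) I). lra.
Qed.

Lemma fle_eadd_nonneg {n} (f g h : vec n -> ext) :
  (forall x v, f x = Some v -> ele (Some 0) (g x)) ->
  (forall x, h x = eadd (f x) (g x)) -> fle f h.
Proof.
  intros hg hh x. rewrite hh. destruct (f x) as [v|] eqn:E; [|exact I].
  specialize (hg x v E). destruct (g x); simpl in *; lra.
Qed.

Lemma separating_slope a t1 t2 : a < 0 -> 0 < t1 < t2 ->
  exists mu, 0 < mu /\ a + mu * t1 < 0 /\ 0 < a + mu * t2.
Proof.
  intros ha ht. exists (- 2 * a / (t1 + t2)).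
  assert (hs : 0 < / (t1 + t2)) by (apply Rinv_0_lt_compat; lra).
  replace (a + - 2 * a / (t1 + t2) * t1) with (a * (t2 - t1) * / (t1 + t2)) by (field; lra).
  replace (a + - 2 * a / (t1 + t2) * t2) with (- a * (t2 - t1) * / (t1 + t2)) by (field; lra).
  assert (0 < (t2 - t1) * / (t1 + t2)) by (apply Rmult_lt_0_compat; lra).
  split; [unfold Rdiv; nra|split; nra].
Qed.

Lemma Cvx_finite_point {n} (f : vec n -> ext) : Cvx f -> exists x v, f x = Some v.
Proof. intros [_ [_ [x hx]]]. destruct (f x) eqn:E; [eauto|congruence]. Qed.

Lemma Cvx_point_supported {n} (f : vec n -> ext) q : Cvx f ->
  (forall x, x <> q -> f x = None) -> exists v, f q = Some v.
Proof.
  intros hf h. destruct (Cvx_finite_point f hf) as [x [v hv]].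
  destruct (dec (x = q)) as [e|e]; [subst; eauto|]. rewrite h in hv; congruence.
Qed.

Lemma point_supported_comparable {n} (q : vec n) f g : Cvx f -> Cvx g ->
  (forall x, x <> q -> f x = None) -> (forall x, x <> q -> g x = None) ->
  fle f g \/ fle g f.
Proof.
  intros hf hg ef eg.
  destruct (Cvx_point_supported f q hf ef) as [v1 hv1].
  destruct (Cvx_point_supported g q hg eg) as [v2 hv2].
  destruct (Rle_or_lt v1 v2) as [h|h]; [left|right]; intro x;
    destruct (dec (x = q)) as [E|E];
    solve [subst; rewrite hv1, hv2; simpl; lra | rewrite ef, eg by auto; simpl; auto].
Qed.

Definition const_fn {n} (c : R) : vec n -> ext := fun _ => Some c.

Definition delta {n} (q : vec n) (c : R) : vec n -> ext :=
  fun x => if dec (x = q) then Some c else None.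

(* [x] lies on the closed ray R_+ q; [x k / q k] is its coordinate on that
   ray, for a fixed index [k] with [q k <> 0]. *)
Definition on_ray {n} (q : vec n) k (x : vec n) : Prop :=
  0 <= x k / q k /\ forall i, x i = x k / q k * q i.

Definition ray_lin {n} (q : vec n) k lam : vec n -> ext :=
  fun x => if dec (on_ray q k x) then Some (lam * (x k / q k)) else None.

Lemma Cvx_const {n} c : Cvx (@const_fn n c).
Proof.
  split; [|split].
  - intros x y l hl. unfold const_fn; simpl. nra.
  - intros x t ht. exists 1. split; [lra|]. intros y _. exact ht.
  - exists vzero. discriminate.
Qed.

Lemma pos_hom_const0 {n} : pos_hom (@const_fn n 0).
Proof. intros x l hl. unfold const_fn; simpl. f_equal; ring. Qed.

Lemma delta_on {n} (q : vec n) e : delta q e q = Some e.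
Proof. unfold delta. destruct (dec (q = q)); congruence. Qed.

Lemma delta_off {n} (q : vec n) e x : x <> q -> delta q e x = None.
Proof. intro h. unfold delta. destruct (dec (x = q)); congruence. Qed.

Lemma fle_delta {n} (phi : vec n -> ext) q e : fle phi (delta q e) <-> ele (phi q) (Some e).
Proof.
  split.
  - intro h. specialize (h q). now rewrite delta_on in h.
  - intros h x. destruct (dec (x = q)) as [->|E].
    + now rewrite delta_on.
    + rewrite delta_off by auto. apply ele_top.
Qed.

Lemma Cvx_delta {n} (q : vec n) c : Cvx (delta q c).
Proof.
  split; [|split].
  - intros x y l hl.
    destruct (dec (x = q)) as [->|ex]; [|rewrite (delta_off q c x ex); apply ele_top].
    destruct (dec (y = q)) as [->|ey]; [|rewrite (delta_off q c y ey), eadd_top_r; apply ele_top].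
    replace (vadd (vscal l q) (vscal (1 - l) q)) with q
      by (apply vec_ext; intro i; unfold vadd, vscal; ring).
    rewrite delta_on. simpl. nra.
  - intros x t ht. destruct (dec (x = q)) as [->|ex].
    + exists 1. split; [lra|]. intros y _.
      destruct (dec (y = q)) as [->|ey]; [exact ht|now rewrite delta_off].
    + destruct (vec_neq _ _ ex) as [i hi].
      exists (Rabs (x i - q i)). split; [apply Rabs_pos_lt; lra|].
      intros y hy. destruct (dec (y = q)) as [->|ey]; [|now rewrite delta_off].
      specialize (hy i). rewrite Rabs_minus_sym in hy. lra.
  - exists q. now rewrite delta_on.
Qed.

Lemma pos_hom_delta0 {n} : pos_hom (@delta n vzero 0).
Proof.
  intros x l hl. unfold delta.
  destruct (dec (vscal l x = vzero)) as [e|e]; destruct (dec (x = vzero)) as [e2|e2];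
    simpl; auto.
  - f_equal; ring.
  - exfalso. apply e2, vec_ext. intro i.
    assert (h := f_equal (fun f => f i) e). unfold vscal, vzero in *; simpl in h.
    apply Rmult_integral in h. destruct h; lra.
  - exfalso. apply e. subst. apply vec_ext. intro i. unfold vscal, vzero. ring.
Qed.

Section Ray.
Context {n : nat} (q : vec n) (k : Fin.t n).
Hypothesis hq : q k <> 0.

Lemma ray_coord_eq x t : (forall i, x i = t * q i) -> x k / q k = t.
Proof. intro h. rewrite h. field. auto. Qed.

Lemma on_ray_self : on_ray q k q.
Proof.
  assert (e : q k / q k = 1) by (field; auto).
  split; [lra|]. intro i. rewrite e. ring.
Qed.

Lemma on_ray_vscal x : on_ray q k x -> x = vscal (x k / q k) q.
Proof. intros [_ h]. apply vec_ext. intro i. unfold vscal. apply h. Qed.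

Lemma on_ray_pos x : on_ray q k x -> x <> vzero -> 0 < x k / q k.
Proof.
  intros [h0 h1] hx. destruct (Rle_lt_or_eq _ _ h0) as [h|h]; auto. exfalso.
  apply hx, vec_ext. intro i. rewrite (h1 i), <- h. unfold vzero. ring.
Qed.

Lemma ray_lin_at lam x t : on_ray q k x -> x k / q k = t -> ray_lin q k lam x = Some (lam * t).
Proof. intros hx ht. unfold ray_lin. destruct (dec _); [subst; auto|contradiction]. Qed.

Lemma ray_lin_self lam : ray_lin q k lam q = Some lam.
Proof.
  rewrite (ray_lin_at lam q 1 on_ray_self) by (field; auto). f_equal; ring.
Qed.

Lemma convex_ray_lin lam : convex (ray_lin q k lam).
Proof.
  intros x y l hl. unfold ray_lin at 2 3.
  destruct (dec (on_ray q k x)) as [[hx0 hx]|ex]; [|apply ele_top].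
  destruct (dec (on_ray q k y)) as [[hy0 hy]|ey]; [|apply ele_top].
  set (tx := x k / q k) in *. set (ty := y k / q k) in *.
  assert (hz : forall i, vadd (vscal l x) (vscal (1 - l) y) i = (l * tx + (1 - l) * ty) * q i).
  { intro i. unfold vadd, vscal. rewrite (hx i), (hy i). ring. }
  assert (hon : on_ray q k (vadd (vscal l x) (vscal (1 - l) y))).
  { split; rewrite (ray_coord_eq _ _ hz); [nra|exact hz]. }
  rewrite (ray_lin_at lam _ _ hon (ray_coord_eq _ _ hz)). simpl. nra.
Qed.

(* Off the ray, being on the ray fails through an open condition, either on
   the sign of the coordinate or on proportionality of a coordinate. *)
Lemma off_ray_open x : ~ on_ray q k x -> exists d, 0 < d /\
  forall y, (forall i, Rabs (y i - x i) < d) -> ~ on_ray q k y.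
Proof.
  intro ex. apply not_and_or in ex. destruct ex as [ex|ex].
  - destruct (mul_uniform_cont (/ q k) (- (x k / q k))) as [d [hd hd2]]; [lra|].
    exists d. split; auto. intros y hy [hy0 _].
    specialize (hd2 (y k) (x k) (hy k)).
    replace (/ q k * y k) with (y k / q k) in hd2 by (field; auto).
    replace (/ q k * x k) with (x k / q k) in hd2 by (field; auto).
    apply Rabs_def2 in hd2. lra.
  - apply not_all_ex_not in ex. destruct ex as [i hi].
    set (g := x i - x k / q k * q i).
    assert (hg : 0 < Rabs g) by (apply Rabs_pos_lt; unfold g; lra).
    destruct (mul_uniform_cont (q i / q k) (Rabs g / 2)) as [d [hd hd2]]; [lra|].
    exists (Rmin d (Rabs g / 2)). split; [apply Rmin_pos; lra|].
    intros y hy [_ hy1].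
    specialize (hd2 (y k) (x k) (Rlt_le_trans _ _ _ (hy k) (Rmin_l _ _))).
    pose proof (Rlt_le_trans _ _ _ (hy i) (Rmin_r _ _)) as hyi.
    specialize (hy1 i).
    replace (q i / q k * y k) with (y k / q k * q i) in hd2 by (field; auto).
    replace (q i / q k * x k) with (x k / q k * q i) in hd2 by (field; auto).
    apply Rabs_def2 in hd2. apply Rabs_def2 in hyi.
    assert (hgd : g = x i - x k / q k * q i) by reflexivity. clearbody g.
    destruct (Rcase_abs g) as [hc|hc];
      [rewrite Rabs_left in * by lra | rewrite Rabs_right in * by lra]; lra.
Qed.

Lemma lsc_ray_lin lam : lsc (ray_lin q k lam).
Proof.
  intros x t ht. unfold ray_lin in ht |- *. destruct (dec (on_ray q k x)) as [hx|ex].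
  - simpl in ht.
    destruct (mul_uniform_cont (lam / q k) (lam * (x k / q k) - t)) as [d [hd hd2]]; [lra|].
    exists d. split; auto. intros y hy. destruct (dec (on_ray q k y)); simpl; auto.
    specialize (hd2 (y k) (x k) (hy k)).
    replace (lam / q k * y k) with (lam * (y k / q k)) in hd2 by (field; auto).
    replace (lam / q k * x k) with (lam * (x k / q k)) in hd2 by (field; auto).
    apply Rabs_def2 in hd2. lra.
  - destruct (off_ray_open x ex) as [d [hd hoff]].
    exists d. split; auto. intros y hy.
    destruct (dec (on_ray q k y)) as [hy'|]; simpl; auto. exfalso; exact (hoff y hy hy').
Qed.

Lemma Cvx_ray_lin lam : Cvx (ray_lin q k lam).
Proof.
  split; [apply convex_ray_lin|split; [apply lsc_ray_lin|]].
  exists q. now rewrite ray_lin_self.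
Qed.

Lemma pos_hom_ray_lin lam : pos_hom (ray_lin q k lam).
Proof.
  intros x l hl. unfold ray_lin.
  assert (e1 : vscal l x k / q k = l * (x k / q k)) by (unfold vscal; field; auto).
  destruct (dec (on_ray q k (vscal l x))) as [[h0 h1]|e];
    destruct (dec (on_ray q k x)) as [[g0 g1]|e2]; simpl; auto.
  - f_equal. unfold vscal. field. auto.
  - exfalso; apply e2. unfold vscal in *. rewrite e1 in h0, h1. split.
    + nra.
    + intro i. apply Rmult_eq_reg_l with l; [|lra]. rewrite h1. ring.
  - exfalso; apply e. unfold on_ray, vscal in *. rewrite e1. split.
    + nra.
    + intro i. rewrite (g1 i). ring.
Qed.

Lemma ray_lin_le_delta lam e : fle (ray_lin q k lam) (delta q e) <-> lam <= e.
Proof. rewrite fle_delta, ray_lin_self. simpl. tauto. Qed.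

End Ray.

Section Characterization.

Variable n : nat.
Variable T : (vec n -> ext) -> (vec n -> ext).
Hypothesis T_cvx : forall phi, Cvx phi -> Cvx (T phi).
Hypothesis T_order : forall phi psi, Cvx phi -> Cvx psi ->
  (fle phi psi <-> fle (T phi) (T psi)).
Hypothesis T_fix_hom : forall phi, Cvx phi -> pos_hom phi -> forall x, T phi x = phi x.
Hypothesis T_image_add : forall phi psi, Cvx phi -> Cvx psi ->
  (exists x, eadd (T phi x) (T psi x) <> None) ->
  exists chi, Cvx chi /\ forall x, T chi x = eadd (T phi x) (T psi x).

Lemma T_mono phi psi : Cvx phi -> Cvx psi -> fle phi psi -> fle (T phi) (T psi).
Proof. intros hp hs. apply T_order; auto. Qed.

Lemma T_reflect phi psi : Cvx phi -> Cvx psi -> fle (T phi) (T psi) -> fle phi psi.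
Proof. intros hp hs. apply T_order; auto. Qed.

Lemma T_ray_lin q k lam x : q k <> 0 -> T (ray_lin q k lam) x = ray_lin q k lam x.
Proof. intro hq. apply T_fix_hom; [apply Cvx_ray_lin|apply pos_hom_ray_lin]; auto. Qed.

Lemma T_const0 x : T (const_fn 0) x = Some 0.
Proof. rewrite T_fix_hom; [reflexivity|apply Cvx_const|apply pos_hom_const0]. Qed.

Lemma T_delta_origin0 x : T (delta vzero 0) x = delta vzero 0 x.
Proof. apply T_fix_hom; [apply Cvx_delta|apply pos_hom_delta0]. Qed.

Lemma image_sum_above phi psi : Cvx phi -> Cvx psi ->
  (exists x, eadd (T phi x) (T psi x) <> None) ->
  (forall x v, T phi x = Some v -> ele (Some 0) (T psi x)) ->
  exists chi, Cvx chi /\ fle (T phi) (T chi) /\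
    forall x, T chi x = eadd (T phi x) (T psi x).
Proof.
  intros hp hs hfin hnn. destruct (T_image_add phi psi hp hs hfin) as [chi [hc he]].
  exists chi. split; [exact hc|split; [exact (fle_eadd_nonneg _ _ _ hnn he)|exact he]].
Qed.

(* [T (const_fn (-1))] is a negative constant: it is convex and bounded
   above by [T (const_fn 0) = 0], hence constant, and it differs from 0
   because [T] is injective on Cvx. *)
Lemma T_const_m1_constant : exists a, a < 0 /\ forall x, T (const_fn (-1)) x = Some a.
Proof.
  assert (hb : forall z, ele (T (const_fn (-1)) z) (Some 0)).
  { intro z. rewrite <- (T_const0 z). apply T_mono; try apply Cvx_const.
    intro x. unfold const_fn; simpl; lra. }
  assert (hc : convex (T (const_fn (-1)))) by apply T_cvx, Cvx_const.
  pose proof (hb vzero) as h0.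
  destruct (T (const_fn (-1)) vzero) as [a|] eqn:E; [|contradiction]. simpl in h0.
  assert (hconst : forall x, T (const_fn (-1)) x = Some a)
    by (intro x; rewrite (convex_bounded_const _ hc hb x vzero); exact E).
  exists a. split; [|exact hconst].
  destruct (Rle_lt_or_eq _ _ h0) as [h|h]; auto. exfalso. subst a.
  assert (h : fle (T (const_fn 0)) (T (const_fn (-1)))).
  { intro x. rewrite T_const0, hconst. simpl; lra. }
  apply T_reflect in h; try apply Cvx_const. specialize (h vzero). simpl in h. lra.
Qed.

(* The dilation factor of [T], read off from [T (const_fn (-1)) = - scale]. *)
Definition scale : R :=
  match T (const_fn (-1)) vzero with Some a => - a | None => 1 end.

Lemma T_const_m1 x : T (const_fn (-1)) x = Some (- scale).
Proof.
  destruct T_const_m1_constant as [a [_ ha]]. unfold scale. rewrite !ha. f_equal. ring.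
Qed.

Lemma scale_pos : 0 < scale.
Proof.
  destruct T_const_m1_constant as [a [ha hx]]. unfold scale. rewrite hx. lra.
Qed.

Lemma above_delta_supported q e chi : Cvx chi -> fle (T (delta q e)) (T chi) ->
  forall x, x <> q -> chi x = None.
Proof.
  intros hc h x hx. apply T_reflect in h; [|apply Cvx_delta|auto].
  specialize (h x). rewrite delta_off in h by auto. apply ele_top_inv; auto.
Qed.

Lemma above_delta_comparable q e1 e2 chi1 chi2 : Cvx chi1 -> Cvx chi2 ->
  fle (T (delta q e1)) (T chi1) -> fle (T (delta q e2)) (T chi2) ->
  fle (T chi1) (T chi2) \/ fle (T chi2) (T chi1).
Proof.
  intros hc1 hc2 h1 h2.
  destruct (point_supported_comparable q chi1 chi2 hc1 hc2
              (above_delta_supported q e1 chi1 hc1 h1)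
              (above_delta_supported q e2 chi2 hc2 h2)) as [c|c];
    [left|right]; apply T_mono; auto.
Qed.

Section DeltaImage.
Variables (q : vec n) (k : Fin.t n).
Hypothesis hq : q k <> 0.

Lemma q_nonzero : q <> vzero.
Proof. intro h. apply hq. rewrite h. reflexivity. Qed.

(* From [ray_lin q k e <= delta q e]: [T (delta q e)] is finite only on the
   ray, where it dominates [e t]. *)
Lemma T_delta_on_ray e x v : T (delta q e) x = Some v ->
  on_ray q k x /\ e * (x k / q k) <= v.
Proof.
  intro hx.
  assert (h : fle (ray_lin q k e) (delta q e)) by (apply ray_lin_le_delta; auto; lra).
  apply T_mono in h; [|apply Cvx_ray_lin; auto|apply Cvx_delta].
  specialize (h x). rewrite T_ray_lin, hx in h by auto.
  unfold ray_lin in h. destruct (dec (on_ray q k x)); [|contradiction]. simpl in h. auto.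
Qed.

Lemma T_ray_lin_on_delta e x v lam : T (delta q e) x = Some v ->
  T (ray_lin q k lam) x = Some (lam * (x k / q k)).
Proof.
  intro hx. rewrite T_ray_lin by auto.
  exact (ray_lin_at q k lam x _ (proj1 (T_delta_on_ray e x v hx)) eq_refl).
Qed.

(* [T (delta q e)] is +oo at the origin: otherwise adding [delta vzero 0]
   would give an image above both [T (delta q e)] and [delta vzero 0],
   i.e. the image of a function supported at [q] but +oo at [q]. *)
Lemma T_delta_origin e : T (delta q e) vzero = None.
Proof.
  destruct (T (delta q e) vzero) as [v|] eqn:E; auto. exfalso.
  destruct (T_delta_on_ray e vzero v E) as [_ hv].
  replace (vzero k / q k) with 0 in hv by (unfold vzero; field; auto).
  destruct (image_sum_above (delta q e) (delta vzero 0) (Cvx_delta _ _) (Cvx_delta _ _))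
    as [chi [hc [habove hchi]]].
  { exists vzero. rewrite E, T_delta_origin0, delta_on. discriminate. }
  { intros x w _. rewrite T_delta_origin0. unfold delta. destruct (dec _); simpl; lra. }
  assert (hb : fle (delta vzero 0) chi).
  { apply T_reflect; [apply Cvx_delta|auto|]. intro x. rewrite hchi, T_delta_origin0.
    destruct (dec (x = vzero)) as [->|ex].
    - rewrite E, delta_on. simpl. lra.
    - rewrite delta_off, eadd_top_r by auto. apply ele_top. }
  destruct (Cvx_point_supported chi q hc (above_delta_supported q e chi hc habove))
    as [w hw].
  specialize (hb q). rewrite delta_off, hw in hb; [exact hb|exact q_nonzero].
Qed.

Lemma T_delta_coord_pos e x v : T (delta q e) x = Some v -> 0 < x k / q k.
Proof.
  intro hx. apply (on_ray_pos q k); [exact (proj1 (T_delta_on_ray e x v hx))|].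
  intros ->. rewrite T_delta_origin in hx. discriminate.
Qed.

(* [T (delta q 0)] vanishes on its domain: a positive value [v] at [x]
   would make [2 T (delta q 0)] and [T (delta q 0) + lam t] (with
   [lam t = v/2] at [x]) incomparable. *)
Lemma T_delta0_value x v : T (delta q 0) x = Some v -> v = 0.
Proof.
  intro hx. destruct (T_delta_on_ray 0 x v hx) as [hR hv]. rewrite Rmult_0_l in hv.
  destruct (Rle_lt_or_eq _ _ hv) as [hp|]; auto. exfalso.
  set (t := x k / q k). pose proof (T_delta_coord_pos 0 x v hx) as ht. fold t in ht.
  set (lam := v / (2 * t)). assert (hlam : 0 < lam) by (apply Rdiv_lt_0_compat; lra).
  assert (hnn : forall y w, T (delta q 0) y = Some w -> 0 <= w).
  { intros y w hy. destruct (T_delta_on_ray 0 y w hy) as [_ h]. lra. }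
  destruct (image_sum_above (delta q 0) (delta q 0) (Cvx_delta _ _) (Cvx_delta _ _))
    as [c1 [hc1 [a1 e1]]].
  { exists x. rewrite hx. discriminate. }
  { intros y w hy. rewrite hy. exact (hnn y w hy). }
  destruct (image_sum_above (delta q 0) (ray_lin q k lam) (Cvx_delta _ _)
              (Cvx_ray_lin _ _ hq _)) as [c2 [hc2 [a2 e2]]].
  { exists x. rewrite hx, (T_ray_lin_on_delta 0 x v lam hx). discriminate. }
  { intros y w hy. rewrite (T_ray_lin_on_delta 0 y w lam hy). simpl.
    pose proof (T_delta_coord_pos 0 y w hy). nra. }
  destruct (above_delta_comparable q 0 0 c1 c2 hc1 hc2 a1 a2) as [c|c].
  - specialize (c x). rewrite e1, e2, hx, (T_ray_lin_on_delta 0 x v lam hx) in c.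
    simpl in c. fold t in c. unfold lam in c.
    replace (v / (2 * t) * t) with (v / 2) in c by (field; lra). lra.
  - assert (h : fle (T (ray_lin q k lam)) (T (delta q 0))).
    { intro y. destruct (T (delta q 0) y) as [w|] eqn:E; [|apply ele_top].
      specialize (c y). rewrite e1, e2, E, (T_ray_lin_on_delta 0 y w lam E) in c.
      rewrite (T_ray_lin_on_delta 0 y w lam E). simpl in c |- *. lra. }
    apply T_reflect, ray_lin_le_delta in h; auto; [lra|apply Cvx_ray_lin; auto|apply Cvx_delta].
Qed.

(* By lower semicontinuity at the origin (where [T (delta q 0)] is +oo),
   the domain of [T (delta q 0)] stays away from the origin. *)
Lemma T_delta0_away : exists al, 0 < al /\
  forall x v, T (delta q 0) x = Some v -> al <= x k / q k.
Proof.
  destruct (T_cvx (delta q 0) (Cvx_delta _ _)) as [_ [hl _]].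
  destruct (hl vzero (1/2)) as [d [hd hball]]; [rewrite T_delta_origin; exact I|].
  destruct (vec_bound n q) as [M [hM hqM]].
  exists (d / M). split; [apply Rdiv_lt_0_compat; auto|].
  intros x v hx.
  pose proof (T_delta0_value x v hx) as hv0. subst v.
  destruct (T_delta_on_ray 0 x 0 hx) as [[_ hR] _].
  pose proof (T_delta_coord_pos 0 x 0 hx) as ht.
  destruct (Rle_or_lt (d / M) (x k / q k)) as [h|h]; auto. exfalso.
  assert (hnear : forall i, Rabs (x i - vzero i) < d).
  { intro i. rewrite (hR i). unfold vzero. rewrite Rminus_0_r, Rabs_mult.
    rewrite (Rabs_right (x k / q k)) by lra.
    specialize (hqM i). pose proof (Rabs_pos (q i)).
    apply Rle_lt_trans with (x k / q k * M); [apply Rmult_le_compat_l; lra|].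
    apply Rmult_lt_reg_r with (/ M); [apply Rinv_0_lt_compat; lra|].
    rewrite Rmult_assoc, Rinv_r, Rmult_1_r by lra. exact h. }
  specialize (hball x hnear). rewrite hx in hball. simpl in hball. lra.
Qed.

(* [T (delta q 0)] cannot be finite at two points [t1 q], [t2 q] with
   [t1 < t2]: with [al] as above and [lam' = scale / al], the images
   [T (delta q 0) - scale + (lam' + mu) t] and [T (delta q 0) + lam' t]
   both lie above [T (delta q 0)], yet they are ordered differently at
   [t1] and at [t2] for the slope [mu] of [separating_slope]. *)
Lemma T_delta0_not_two_points al x1 x2 : 0 < al ->
  (forall x v, T (delta q 0) x = Some v -> al <= x k / q k) ->
  T (delta q 0) x1 = Some 0 -> T (delta q 0) x2 = Some 0 ->
  x1 k / q k < x2 k / q k -> False.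
Proof.
  intros hal hA e1 e2 hlt.
  pose proof (hA x1 0 e1) as ht1. pose proof (hA x2 0 e2) as ht2.
  destruct (separating_slope (- scale) (x1 k / q k) (x2 k / q k)) as [mu [hmu [f1 f2]]];
    [pose proof scale_pos; lra|lra|].
  set (lam' := scale / al). set (lam := lam' + mu).
  assert (hl' : 0 <= lam') by (unfold lam'; pose proof scale_pos;
                               left; apply Rdiv_lt_0_compat; lra).
  destruct (T_image_add (const_fn (-1)) (ray_lin q k lam) (Cvx_const _)
              (Cvx_ray_lin _ _ hq _)) as [ca [hca ea]].
  { exists q. rewrite T_const_m1, T_ray_lin, ray_lin_self by auto. discriminate. }
  assert (eca : forall y w, T (delta q 0) y = Some w ->
                  T ca y = Some (- scale + lam * (y k / q k))).
  { intros y w hy. rewrite ea, T_const_m1, (T_ray_lin_on_delta 0 y w lam hy). reflexivity. }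
  destruct (image_sum_above (delta q 0) ca (Cvx_delta _ _) hca) as [cX [hcX [aX eX]]].
  { exists x1. rewrite e1, (eca x1 0 e1). discriminate. }
  { intros y w hy. rewrite (eca y w hy). simpl.
    assert (lam * al <= lam * (y k / q k))
      by (apply Rmult_le_compat_l; [unfold lam; lra|exact (hA y w hy)]).
    assert (lam * al = scale + mu * al) by (unfold lam, lam'; field; lra).
    nra. }
  destruct (image_sum_above (delta q 0) (ray_lin q k lam') (Cvx_delta _ _)
              (Cvx_ray_lin _ _ hq _)) as [cY [hcY [aY eY]]].
  { exists x1. rewrite e1, (T_ray_lin_on_delta 0 x1 0 lam' e1). discriminate. }
  { intros y w hy. rewrite (T_ray_lin_on_delta 0 y w lam' hy). simpl.
    pose proof (T_delta_coord_pos 0 y w hy). nra. }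
  destruct (above_delta_comparable q 0 0 cX cY hcX hcY aX aY) as [c|c];
    [specialize (c x2); rewrite eX, eY, e2, (eca x2 0 e2),
       (T_ray_lin_on_delta 0 x2 0 lam' e2) in c
    |specialize (c x1); rewrite eX, eY, e1, (eca x1 0 e1),
       (T_ray_lin_on_delta 0 x1 0 lam' e1) in c];
    simpl in c; unfold lam in c; nra.
Qed.

Lemma T_delta0_single_point x1 x2 v1 v2 :
  T (delta q 0) x1 = Some v1 -> T (delta q 0) x2 = Some v2 -> x1 = x2.
Proof.
  intros e1 e2.
  pose proof (T_delta0_value x1 v1 e1). pose proof (T_delta0_value x2 v2 e2). subst.
  destruct T_delta0_away as [al [hal hA]].
  destruct (T_delta_on_ray 0 x1 0 e1) as [hR1 _].
  destruct (T_delta_on_ray 0 x2 0 e2) as [hR2 _].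
  destruct (Rtotal_order (x1 k / q k) (x2 k / q k)) as [h|[h|h]].
  - exfalso; exact (T_delta0_not_two_points al x1 x2 hal hA e1 e2 h).
  - rewrite (on_ray_vscal q k x1 hR1), (on_ray_vscal q k x2 hR2), h. reflexivity.
  - exfalso; exact (T_delta0_not_two_points al x2 x1 hal hA e2 e1 h).
Qed.

(* The domain of [T (delta q e)] is contained in that of [T (delta q 0)]:
   for [e >= 0] by monotonicity; for [e < 0] because the image
   [T (delta q e) - e t] is above [T (delta q e)] and above [T 0], so its
   preimage is above [delta q 0]. *)
Lemma T_delta_domain e x v : T (delta q e) x = Some v -> exists w, T (delta q 0) x = Some w.
Proof.
  intro hx. destruct (Rle_or_lt 0 e) as [he|he].
  - assert (h : fle (T (delta q 0)) (T (delta q e))).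
    { apply T_mono; try apply Cvx_delta. apply fle_delta. rewrite delta_on. simpl. lra. }
    specialize (h x). rewrite hx in h. destruct (T (delta q 0) x); [eauto|contradiction].
  - destruct (image_sum_above (delta q e) (ray_lin q k (- e)) (Cvx_delta _ _)
                (Cvx_ray_lin _ _ hq _)) as [c [hc [habove ec]]].
    { exists x. rewrite hx, (T_ray_lin_on_delta e x v (- e) hx). discriminate. }
    { intros y w hy. rewrite (T_ray_lin_on_delta e y w (- e) hy). simpl.
      pose proof (T_delta_coord_pos e y w hy). nra. }
    pose proof (above_delta_supported q e c hc habove) as hsupp.
    assert (hpos : fle (T (const_fn 0)) (T c)).
    { intro z. rewrite ec, T_const0. destruct (T (delta q e) z) as [u|] eqn:E; [|exact I].
      destruct (T_delta_on_ray e z u E) as [_ hu].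
      rewrite (T_ray_lin_on_delta e z u (- e) E). simpl. lra. }
    apply T_reflect in hpos; [|apply Cvx_const|auto].
    assert (hdc : fle (delta q 0) c).
    { intro z. destruct (dec (z = q)) as [->|ez].
      - rewrite delta_on. exact (hpos q).
      - rewrite delta_off, hsupp by auto. exact I. }
    apply T_mono in hdc; [|apply Cvx_delta|auto].
    specialize (hdc x). rewrite ec, hx, (T_ray_lin_on_delta e x v (- e) hx) in hdc.
    destruct (T (delta q 0) x); [eauto|contradiction].
Qed.

(* At the point [r q] carrying its domain, [T (delta q e)] takes the value
   [r e]: [r e] is a lower bound by [T_delta_on_ray], and a larger value
   would put [ray_lin q k (v / r)] below [T (delta q e)], hence
   [v / r <= e]. *)
Lemma T_delta_point_value r e : 0 < r ->
  (forall x, x <> vscal r q -> T (delta q e) x = None) ->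
  T (delta q e) (vscal r q) = Some (r * e).
Proof.
  intros hr hoff.
  destruct (Cvx_point_supported _ _ (T_cvx _ (Cvx_delta q e)) hoff) as [v hv].
  assert (hcoord : vscal r q k / q k = r) by (unfold vscal; field; auto).
  assert (hon : on_ray q k (vscal r q)).
  { split; rewrite hcoord; [lra|intro i; reflexivity]. }
  destruct (T_delta_on_ray e _ v hv) as [_ hlow]. rewrite hcoord in hlow.
  assert (h : fle (T (ray_lin q k (v / r))) (T (delta q e))).
  { intro y. rewrite T_ray_lin by auto. destruct (dec (y = vscal r q)) as [->|ey].
    - rewrite hv, (ray_lin_at q k (v / r) _ r hon hcoord). simpl. right. field. lra.
    - rewrite hoff by auto. apply ele_top. }
  apply T_reflect, ray_lin_le_delta in h; auto; [|apply Cvx_ray_lin; auto|apply Cvx_delta].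
  rewrite hv. f_equal. apply Rle_antisym; [|lra].
  apply Rmult_le_reg_r with (/ r); [apply Rinv_0_lt_compat; lra|].
  replace (r * e * / r) with e by (field; lra). exact h.
Qed.

Lemma T_delta_form : exists r, 0 < r /\
  forall e x, T (delta q e) x = delta (vscal r q) (r * e) x.
Proof.
  destruct (Cvx_finite_point _ (T_cvx _ (Cvx_delta q 0))) as [j [v0 hj]].
  set (r := j k / q k).
  assert (hr : 0 < r) by exact (T_delta_coord_pos 0 j v0 hj).
  assert (hjr : j = vscal r q) by exact (on_ray_vscal q k j (proj1 (T_delta_on_ray 0 j v0 hj))).
  assert (hoff : forall e x, x <> vscal r q -> T (delta q e) x = None).
  { intros e x hx. destruct (T (delta q e) x) as [v|] eqn:E; auto. exfalso.
    destruct (T_delta_domain e x v E) as [w hw].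
    apply hx. rewrite <- hjr. exact (T_delta0_single_point x j w v0 hw hj). }
  exists r. split; auto. intros e x. destruct (dec (x = vscal r q)) as [->|ex].
  - rewrite delta_on. exact (T_delta_point_value r e hr (hoff e)).
  - rewrite delta_off, hoff by auto. reflexivity.
Qed.

End DeltaImage.

(* The dilation factor [r] in [T_delta_form] is [scale], by comparing
   [delta q e] with the constant [-1]. *)
Lemma delta_rate_is_scale q r : 0 < r ->
  (forall e x, T (delta q e) x = delta (vscal r q) (r * e) x) -> r = scale.
Proof.
  intros hr hD. pose proof scale_pos as hs.
  assert (hle : fle (const_fn (-1)) (delta q (-1))) by (apply fle_delta; simpl; lra).
  apply T_mono in hle; [|apply Cvx_const|apply Cvx_delta].
  specialize (hle (vscal r q)). rewrite T_const_m1, hD, delta_on in hle. simpl in hle.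
  assert (hge : fle (T (const_fn (-1))) (T (delta q (- scale / r)))).
  { intro x. rewrite T_const_m1, hD. destruct (dec (x = vscal r q)) as [->|E].
    - rewrite delta_on. simpl. right. field. lra.
    - rewrite delta_off by auto. exact I. }
  apply T_reflect, fle_delta in hge; [|apply Cvx_const|apply Cvx_delta].
  simpl in hge. assert (- r <= - scale); [|lra].
  apply Rmult_le_reg_r with (/ r); [apply Rinv_0_lt_compat; lra|].
  replace (- r * / r) with (-1) by (field; lra). exact hge.
Qed.

(* Knowing [T] on the deltas at [q] determines [T phi] at [rho q], since
   [phi q <= e] iff [phi <= delta q e]. *)
Lemma T_value_from_delta q rho phi : 0 < rho -> Cvx phi ->
  (forall e x, T (delta q e) x = delta (vscal rho q) (rho * e) x) ->
  T phi (vscal rho q) = escal rho (phi q).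
Proof.
  intros hr hp hD. apply escal_char; auto. intro e.
  rewrite <- !fle_delta. split.
  - intro h. apply T_mono in h; [|auto|apply Cvx_delta].
    exact (fle_ext _ _ _ _ (fun x => eq_refl) (hD e) h).
  - intro h. apply T_reflect; [auto|apply Cvx_delta|].
    exact (fle_ext _ _ _ _ (fun x => eq_refl) (fun x => eq_sym (hD e x)) h).
Qed.

Lemma T_delta_nonzero q : q <> vzero ->
  forall e x, T (delta q e) x = delta (vscal scale q) (scale * e) x.
Proof.
  intro hq. destruct (vec_neq _ _ hq) as [k hk].
  destruct (T_delta_form q k hk) as [r [hr hD]].
  rewrite <- (delta_rate_is_scale q r hr hD). exact hD.
Qed.

Lemma T_value_nonzero phi x : Cvx phi -> x <> vzero ->
  T phi x = escal scale (phi (vscal (/ scale) x)).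
Proof.
  intros hp hx. pose proof scale_pos as hs. rewrite <- (vscal_inv x scale hs) at 1.
  apply T_value_from_delta; auto. apply T_delta_nonzero.
  apply vscal_nonzero; [auto|apply Rinv_neq_0_compat; lra].
Qed.

(* At the origin we use that R^n contains a nonzero vector. *)
Hypothesis n_pos : (1 <= n)%nat.

Lemma T_const_origin c : T (const_fn c) vzero = Some (scale * c).
Proof.
  destruct (exists_nonzero_vec n n_pos) as [w hw].
  apply (convex_value_at_origin _ w); [apply T_cvx, Cvx_const|auto|].
  intros x hx. rewrite T_value_nonzero; auto. apply Cvx_const.
Qed.

Lemma T_delta_zero_off e x : x <> vzero -> T (delta vzero e) x = None.
Proof.
  intro hx. pose proof scale_pos as hs.
  rewrite T_value_nonzero by (auto using Cvx_delta).
  rewrite delta_off; [reflexivity|].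
  apply vscal_nonzero; [auto|apply Rinv_neq_0_compat; lra].
Qed.

(* Since [T (delta vzero e)] lives at the origin, comparing it with the
   constants determines its value there. *)
Lemma T_const_le_T_delta_zero c e :
  fle (T (const_fn c)) (T (delta vzero e)) <->
  ele (Some (scale * c)) (T (delta vzero e) vzero).
Proof.
  rewrite <- T_const_origin. split; [intro h; exact (h vzero)|intros h y].
  destruct (dec (y = vzero)) as [->|hy]; [exact h|].
  rewrite T_delta_zero_off by auto. apply ele_top.
Qed.

Lemma T_delta_zero_origin e : T (delta vzero e) vzero = Some (scale * e).
Proof.
  pose proof scale_pos as hs. apply ext_eq_of_lower. intro c.
  replace c with (scale * (c / scale)) at 2 by (field; lra).
  rewrite <- T_const_le_T_delta_zero, <- T_order; [|apply Cvx_const|apply Cvx_delta].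
  rewrite fle_delta. simpl. split; intro h.
  - apply Rmult_le_reg_l with scale; [lra|].
    replace (scale * (c / scale)) with c by (field; lra). exact h.
  - replace c with (scale * (c / scale)) by (field; lra).
    apply Rmult_le_compat_l; lra.
Qed.

Lemma T_delta q e x : T (delta q e) x = delta (vscal scale q) (scale * e) x.
Proof.
  destruct (dec (q = vzero)) as [->|hq]; [|exact (T_delta_nonzero q hq e x)].
  replace (vscal scale vzero) with (@vzero n)
    by (apply vec_ext; intro i; unfold vscal, vzero; ring).
  destruct (dec (x = vzero)) as [->|hx].
  - rewrite delta_on. apply T_delta_zero_origin.
  - rewrite delta_off by auto. apply T_delta_zero_off; auto.
Qed.

End Characterization.

Theorem theorem1p4 (n : nat) (Hn : (1 <= n)%nat)
  (T : (vec n -> ext) -> (vec n -> ext))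
  (HT : forall phi, Cvx phi -> Cvx (T phi))
  (H1 : forall phi psi, Cvx phi -> Cvx psi ->
          (fle phi psi <-> fle (T phi) (T psi)))
  (H2 : forall phi, Cvx phi -> pos_hom phi -> forall x, T phi x = phi x)
  (H3 : forall phi psi, Cvx phi -> Cvx psi ->
          (exists x, eadd (T phi x) (T psi x) <> None) ->
          exists chi, Cvx chi /\
            forall x, T chi x = eadd (T phi x) (T psi x)) :
  exists C, 0 < C /\
    forall phi, Cvx phi -> forall x : vec n,
      T phi x = escal (/ C) (phi (vscal C x)).
Proof.
  pose proof (scale_pos n T HT H1 H2) as hs.
  exists (/ scale n T). split; [apply Rinv_0_lt_compat; exact hs|].
  intros phi hphi x. rewrite Rinv_inv.
  rewrite <- (vscal_inv x (scale n T) hs) at 1.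
  apply (T_value_from_delta n T H1); auto.
  exact (T_delta n T HT H1 H2 H3 Hn _).
Qed.
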